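(* Let $(A,\mu,E,\Delta,\epsilon)$ be a regular weak multiplier bialgebra over a field. Then for all $a,b\in A$: (1) if $T_3(a\otimes b)=\sum_i x_i\otimes y_i$ then $\sum_i y_i\,\overline\sqcap^L(x_i)=ba$; (2) if $T_4(a\otimes b)=\sum_i x_i\otimes y_i$ then $\sum_i \overline\sqcap^R(y_i)\,x_i=ba$; (3) if $T_1(a\otimes b)=\sum_i x_i\otimes y_i$ then $\sum_i \sqcap^L(x_i)\,y_i=ab$; (4) if $T_2(a\otimes b)=\sum_i x_i\otimes y_i$ then $\sum_i x_i\,\sqcap^R(y_i)=ab$. (That is, $\mu^{\mathrm{op}}(\overline\sqcap^L\otimes\mathrm{id})T_3=\mu^{\mathrm{op}}$, $\mu^{\mathrm{op}}(\mathrm{id}\otimes\overline\sqcap^R)T_4=\mu^{\mathrm{op}}$, $\mu(\sqcap^L\otimes\mathrm{id})T_1=\mu$, $\mu(\mathrm{id}\otimes\sqcap^R)T_2=\mu$, with $\mu^{\mathrm{op}}(x\otimes y)=yx$.)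
   Context: Let $k$ be a field. A non-unital $k$-algebra $A$ is idempotent if its multiplication $\mu$ is surjective and has non-degenerate multiplication if ($ab=0\ \forall a$)$\Rightarrow b=0$ and ($ba=0\ \forall a$)$\Rightarrow b=0$. $\mathbb M(A)$ is its multiplier algebra (pairs $(\lambda,\rho)$ of linear maps $A\to A$ with $a\lambda(b)=\rho(a)b$), a unital algebra containing $A$ as a dense ideal; $A\otimes A\subseteq\mathbb M(A\otimes A)$. Multiplicative $\gamma:A\to\mathbb M(B)$ with idempotent $e\in\mathbb M(B)$, $\langle\gamma(a)b\rangle=eB$, $\langle b\gamma(a)\rangle=Be$ ($\langle\,\rangle$=span) extends uniquely to multiplicative $\overline\gamma:\mathbb M(A)\to\mathbb M(B)$ with $\overline\gamma(1)=e$. A weak multiplier bialgebra: idempotent $A$ with non-degenerate multiplication, idempotent $E\in\mathbb M(A\otimes A)$, multiplicative linear $\Delta:A\to\mathbb M(A\otimes A)$, linear $\epsilon:A\to k$ with: (i) $T_1(a\otimes b):=\Delta(a)(1\otimes b)$, $T_2(a\otimes b):=(a\otimes1)\Delta(b)$ lie in $A\otimes A$; (ii) $(T_2\otimes\mathrm{id})(\mathrm{id}\otimes T_1)=(\mathrm{id}\otimes T_1)(T_2\otimes\mathrm{id})$; (iii) $(\epsilon\otimes\mathrm{id})T_1=\mu=(\mathrm{id}\otimes\epsilon)T_2$; (iv) $\langle\Delta(a)(b\otimes b')\rangle=\langle E(b\otimes b')\rangle$, $\langle(b\otimes b')\Delta(a)\rangle=\langle(b\otimes b')E\rangle$; (v)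 $(E\otimes1)(1\otimes E)=E^{(3)}=(1\otimes E)(E\otimes1)$ with $E^{(3)}:=(\overline{\mathrm{id}\otimes\Delta})(E)=(\overline{\Delta\otimes\mathrm{id}})(E)$; (vi) $(\epsilon\otimes\mathrm{id})((1\otimes a)E(b\otimes c))=(\epsilon\otimes\mathrm{id})(\Delta(a)(b\otimes c))$ and $(\epsilon\otimes\mathrm{id})((a\otimes b)E(1\otimes c))=(\epsilon\otimes\mathrm{id})((a\otimes b)\Delta(c))$. It is regular if moreover $T_3(a\otimes b):=(1\otimes b)\Delta(a)$ and $T_4(a\otimes b):=\Delta(b)(a\otimes1)$ lie in $A\otimes A$ for all $a,b$. For $a\in A$ define multipliers: $\overline\sqcap^L(a)$ by $\overline\sqcap^L(a)b=(\epsilon\otimes\mathrm{id})((a\otimes1)\Delta(b))$, $b\overline\sqcap^L(a)=(\epsilon\otimes\mathrm{id})((a\otimes b)E)$; $\overline\sqcap^R(a)$ by $b\overline\sqcap^R(a)=(\mathrm{id}\otimes\epsilon)(\Delta(b)(1\otimes a))$, $\overline\sqcap^R(a)b=(\mathrm{id}\otimes\epsilon)(E(b\otimes a))$; $\sqcap^L(a)$ by $\sqcap^L(a)b=(\epsilon\otimes\mathrm{id})(E(a\otimes b))$, $b\sqcap^L(a)=(\epsilon\otimes\mathrm{id})(\Delta(b)(a\otimes1))$; $\sqcap^R(a)$ by $b\sqcap^R(a)=(\mathrm{id}\otimes\epsilon)((b\otimes a)E)$, $\sqcap^R(a)b=(\mathrm{id}\otimes\epsilon)((1\otimes a)\Delta(b))$.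 *)

From HB Require Import structures.
From mathcomp Require Import all_boot all_algebra.
Set Implicit Arguments. Unset Strict Implicit. Unset Printing Implicit Defensive.
Import GRing.Theory.
Local Open Scope ring_scope.

Section WMB.
Variables (k : fieldType) (A : lmodType k).

(* s : tensor2 stands for  \sum_(p <- s) p.1 (x) p.2  in A (x) A.          *)
Definition tensor2 := seq (A * A)%type.
(* s : tensor3 stands for  \sum_(p <- s) p.1.1 (x) p.1.2 (x) p.2.          *)
Definition tensor3 := seq (A * A * A)%type.

Definition bilin (V : lmodType k) (f : A -> A -> V) : Prop :=
  (forall r x x' y, f (r *: x + x') y = r *: f x y + f x' y) /\
  (forall r x y y', f x (r *: y + y') = r *: f x y + f x y').

Definition trilin (V : lmodType k) (f : A -> A -> A -> V) : Prop :=
  [/\ (forall r x x' y z, f (r *: x + x') y z = r *: f x y z + f x' y z),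
      (forall r x y y' z, f x (r *: y + y') z = r *: f x y z + f x y' z) &
      (forall r x y z z', f x y (r *: z + z') = r *: f x y z + f x y z')].

(* equality in A (x) A : via the universal property of the tensor product *)
Definition teq2 (s t : tensor2) : Prop :=
  forall (V : lmodType k) (f : A -> A -> V), bilin f ->
    \sum_(p <- s) f p.1 p.2 = \sum_(p <- t) f p.1 p.2.

Definition teq3 (s t : tensor3) : Prop :=
  forall (V : lmodType k) (f : A -> A -> A -> V), trilin f ->
    \sum_(p <- s) f p.1.1 p.1.2 p.2 = \sum_(p <- t) f p.1.1 p.1.2 p.2.

Definition tscale2 (r : k) (s : tensor2) : tensor2 := [seq (r *: p.1, p.2) | p <- s].
Definition tscale3 (r : k) (s : tensor3) : tensor3 :=
  [seq (r *: p.1.1, p.1.2, p.2) | p <- s].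

(* linear extension to A (x) A of a map given on pure tensors *)
Definition tlift2 (F : A -> A -> tensor2) (s : tensor2) : tensor2 :=
  flatten [seq F p.1 p.2 | p <- s].
Definition tlift3 (F : A -> A -> A -> tensor3) (s : tensor3) : tensor3 :=
  flatten [seq F p.1.1 p.1.2 p.2 | p <- s].

(* bilinear (resp. trilinear) maps A x A -> A (x) A  (= linear maps on A(x)A) *)
Definition tbilin2 (F : A -> A -> tensor2) : Prop :=
  (forall r x x' y, teq2 (F (r *: x + x') y) (tscale2 r (F x y) ++ F x' y)) /\
  (forall r x y y', teq2 (F x (r *: y + y')) (tscale2 r (F x y) ++ F x y')).
Definition ttrilin3 (F : A -> A -> A -> tensor3) : Prop :=
  [/\ (forall r x x' y z, teq3 (F (r *: x + x') y z) (tscale3 r (F x y z) ++ F x' y z)),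
      (forall r x y y' z, teq3 (F x (r *: y + y') z) (tscale3 r (F x y z) ++ F x y' z)) &
      (forall r x y z z', teq3 (F x y (r *: z + z')) (tscale3 r (F x y z) ++ F x y z'))].

Definition tspan2 (P : tensor2 -> Prop) (t : tensor2) : Prop :=
  exists l : seq (k * tensor2),
    (forall q, q \in l -> P q.2) /\
    teq2 t (flatten [seq tscale2 q.1 q.2 | q <- l]).

Section WithMul.
Variable mul : A -> A -> A.

Definition nualg : Prop :=
  [/\ (forall r x x' y, mul (r *: x + x') y = r *: mul x y + mul x' y),
      (forall r x y y', mul x (r *: y + y') = r *: mul x y + mul x y') &
      (forall x y z, mul x (mul y z) = mul (mul x y) z)].

Definition idempotent_alg : Prop :=
  forall c : A, exists s : seq (A * A), c = \sum_(p <- s) mul p.1 p.2.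

Definition nondeg_mul : Prop :=
  (forall b : A, (forall a, mul a b = 0) -> b = 0) /\
  (forall b : A, (forall a, mul b a = 0) -> b = 0).

Definition tprod2 (s t : tensor2) : tensor2 :=
  [seq (mul p.1 q.1, mul p.2 q.2) | p <- s, q <- t].
Definition tprod3 (s t : tensor3) : tensor3 :=
  [seq (mul p.1.1 q.1.1, mul p.1.2 q.1.2, mul p.2 q.2) | p <- s, q <- t].

(* (a(x)1) s,  (1(x)b) s,  s (a(x)1),  s (1(x)b) *)
Definition lmul_1 (a : A) (s : tensor2) : tensor2 := [seq (mul a p.1, p.2) | p <- s].
Definition lmul_2 (b : A) (s : tensor2) : tensor2 := [seq (p.1, mul b p.2) | p <- s].
Definition rmul_1 (s : tensor2) (a : A) : tensor2 := [seq (mul p.1 a, p.2) | p <- s].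
Definition rmul_2 (s : tensor2) (b : A) : tensor2 := [seq (p.1, mul p.2 b) | p <- s].

(* A multiplier of A(x)A, given by its left action L (L x y = lambda(x(x)y))
   and right action R (R x y = rho(x(x)y)). *)
Definition is_mult2 (L R : A -> A -> tensor2) : Prop :=
  [/\ tbilin2 L, tbilin2 R &
      forall x x' y y', teq2 (tprod2 [:: (x, x')] (L y y'))
                             (tprod2 (R x x') [:: (y, y')])].

Definition is_mult3 (L R : A -> A -> A -> tensor3) : Prop :=
  [/\ ttrilin3 L, ttrilin3 R &
      forall x x' x'' y y' y'', teq3 (tprod3 [:: (x, x', x'')] (L y y' y''))
                                     (tprod3 (R x x' x'') [:: (y, y', y'')])].

End WithMul.

Definition eps_id (eps : A -> k) (s : tensor2) : A := \sum_(p <- s) eps p.1 *: p.2.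
Definition id_eps (eps : A -> k) (s : tensor2) : A := \sum_(p <- s) eps p.2 *: p.1.

Record wmb_data := WMBData {
  mul : A -> A -> A;
  eps : A -> k;
  (* E in M(A(x)A):  EL x y = E(x(x)y),  ER x y = (x(x)y)E *)
  EL : A -> A -> tensor2;
  ER : A -> A -> tensor2;
  (* Delta(a) in M(A(x)A):  DL a x y = Delta(a)(x(x)y),  DR a x y = (x(x)y)Delta(a) *)
  DL : A -> A -> A -> tensor2;
  DR : A -> A -> A -> tensor2;
  (* T1 a b = Delta(a)(1(x)b), T2 a b = (a(x)1)Delta(b),
     T3 a b = (1(x)b)Delta(a), T4 a b = Delta(b)(a(x)1)  (elements of A(x)A) *)
  T1 : A -> A -> tensor2;
  T2 : A -> A -> tensor2;
  T3 : A -> A -> tensor2;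
  T4 : A -> A -> tensor2;
  (* E^(3) in M(A(x)A(x)A) *)
  E3L : A -> A -> A -> tensor3;
  E3R : A -> A -> A -> tensor3
}.

Section WMBAx.
Variable W : wmb_data.
Local Notation mul := (mul W).
Local Notation eps := (eps W).
Local Notation EL := (EL W).
Local Notation ER := (ER W).
Local Notation DL := (DL W).
Local Notation DR := (DR W).

(* multipliers E(x)1 and 1(x)E of A(x)A(x)A *)
Definition E1L x y z : tensor3 := [seq (p.1, p.2, z) | p <- EL x y].
Definition E1R x y z : tensor3 := [seq (p.1, p.2, z) | p <- ER x y].
Definition E2L x y z : tensor3 := [seq (x, p.1, p.2) | p <- EL y z].
Definition E2R x y z : tensor3 := [seq (x, p.1, p.2) | p <- ER y z].

(* (id(x)Delta)(u(x)v) = u (x) Delta(v) in M(A(x)A(x)A):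
   its action on x(x)y(x)z from the left / right *)
Definition gIdD_L u v x y z : tensor3 := [seq (mul u x, p.1, p.2) | p <- DL v y z].
Definition gIdD_R u v x y z : tensor3 := [seq (mul x u, p.1, p.2) | p <- DR v y z].
(* (Delta(x)id)(u(x)v) = Delta(u) (x) v *)
Definition gDId_L u v x y z : tensor3 := [seq (p.1, p.2, mul v z) | p <- DL u x y].
Definition gDId_R u v x y z : tensor3 := [seq (p.1, p.2, mul z v) | p <- DR u x y].

(* M = gammabar(E), where gamma : A(x)A -> M(A(x)A(x)A) is multiplicative
   with idempotent e and gammabar(1) = e: characterised by
   M e = M = e M,  M (gamma(w) y) = gamma(E w) y,  (y gamma(w)) M = y gamma(w E). *)
Definition is_ext_E (M_L M_R eL eR : A -> A -> A -> tensor3)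
    (gL gR : A -> A -> A -> A -> A -> tensor3) : Prop :=
  [/\ forall x y z, teq3 (tlift3 M_L (eL x y z)) (M_L x y z)
                /\ teq3 (tlift3 eR (M_R x y z)) (M_R x y z),
      forall x y z, teq3 (tlift3 eL (M_L x y z)) (M_L x y z)
                /\ teq3 (tlift3 M_R (eR x y z)) (M_R x y z),
      forall u v x y z, teq3 (tlift3 M_L (gL u v x y z))
                             (flatten [seq gL p.1 p.2 x y z | p <- EL u v]) &
      forall u v x y z, teq3 (tlift3 M_R (gR u v x y z))
                             (flatten [seq gR p.1 p.2 x y z | p <- ER u v])].

Record is_wmb : Prop := {
  wmb_alg : nualg mul;
  wmb_idem : idempotent_alg mul;
  wmb_nondeg : nondeg_mul mul;
  wmb_E_mult : is_mult2 mul EL ER;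
  wmb_E_idem : forall y y', teq2 (tlift2 EL (EL y y')) (EL y y')
                         /\ teq2 (tlift2 ER (ER y y')) (ER y y');
  wmb_D_mult : forall a, is_mult2 mul (DL a) (DR a);
  wmb_D_lin : forall r a c y y',
      teq2 (DL (r *: a + c) y y') (tscale2 r (DL a y y') ++ DL c y y')
   /\ teq2 (DR (r *: a + c) y y') (tscale2 r (DR a y y') ++ DR c y y');
  wmb_D_mul : forall a c y y',
      teq2 (DL (mul a c) y y') (tlift2 (DL a) (DL c y y'))
   /\ teq2 (DR (mul a c) y y') (tlift2 (DR c) (DR a y y'));
  wmb_eps_lin : forall r x y, eps (r *: x + y) = r * eps x + eps y;
  (* (i): T1(a(x)b) = Delta(a)(1(x)b) and T2(a(x)b) = (a(x)1)Delta(b) lie in A(x)A *)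
  wmb_T1 : forall a b x x',
      teq2 (tprod2 mul (T1 W a b) [:: (x, x')]) (DL a x (mul b x'))
   /\ teq2 (tprod2 mul [:: (x, x')] (T1 W a b)) (rmul_2 mul (DR a x x') b);
  wmb_T2 : forall a b x x',
      teq2 (tprod2 mul (T2 W a b) [:: (x, x')]) (lmul_1 mul a (DL b x x'))
   /\ teq2 (tprod2 mul [:: (x, x')] (T2 W a b)) (DR b (mul x a) x');
  wmb_coass : forall a b c,
      teq3 (flatten [seq [seq (q.1, q.2, p.2) | q <- T2 W a p.1] | p <- T1 W b c])
           (flatten [seq [seq (q.1, p.1, p.2) | p <- T1 W q.2 c] | q <- T2 W a b]);
  wmb_counit : forall a b, eps_id eps (T1 W a b) = mul a b
                        /\ id_eps eps (T2 W a b) = mul a b;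
  wmb_span_L :
      (forall a b b', tspan2 (fun t => exists c c', t = EL c c') (DL a b b'))
   /\ (forall b b', tspan2 (fun t => exists a c c', t = DL a c c') (EL b b'));
  wmb_span_R :
      (forall a b b', tspan2 (fun t => exists c c', t = ER c c') (DR a b b'))
   /\ (forall b b', tspan2 (fun t => exists a c c', t = DR a c c') (ER b b'));
  (* (v): E^(3) = (id(x)Delta)bar(E) = (Delta(x)id)bar(E) and
          (E(x)1)(1(x)E) = E^(3) = (1(x)E)(E(x)1) *)
  wmb_E3_mult : is_mult3 mul (E3L W) (E3R W);
  wmb_E3_idD : is_ext_E (E3L W) (E3R W) E2L E2R gIdD_L gIdD_R;
  wmb_E3_Did : is_ext_E (E3L W) (E3R W) E1L E1R gDId_L gDId_R;
  wmb_E3_12 : forall x y z,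
      teq3 (E3L W x y z) (tlift3 E1L (E2L x y z))
   /\ teq3 (E3R W x y z) (tlift3 E2R (E1R x y z));
  wmb_E3_21 : forall x y z,
      teq3 (E3L W x y z) (tlift3 E2L (E1L x y z))
   /\ teq3 (E3R W x y z) (tlift3 E1R (E2R x y z));
  wmb_eps_E1 : forall a b c,
      eps_id eps (lmul_2 mul a (EL b c)) = eps_id eps (DL a b c);
  wmb_eps_E2 : forall a b c,
      eps_id eps (rmul_2 mul (ER a b) c) = eps_id eps (DR c a b)
}.

(* regular: T3(a(x)b) = (1(x)b)Delta(a) and T4(a(x)b) = Delta(b)(a(x)1) lie in A(x)A *)
Definition is_regular_wmb : Prop :=
  [/\ is_wmb,
      (forall a b x x',
         teq2 (tprod2 mul (T3 W a b) [:: (x, x')]) (lmul_2 mul b (DL a x x'))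
      /\ teq2 (tprod2 mul [:: (x, x')] (T3 W a b)) (DR a x (mul x' b))) &
      (forall a b x x',
         teq2 (tprod2 mul (T4 W a b) [:: (x, x')]) (DL b (mul a x) x')
      /\ teq2 (tprod2 mul [:: (x, x')] (T4 W a b)) (rmul_1 mul (DR b x x') a))].

(* piLbar_l a b = bar-sqcap^L(a) b = (eps(x)id)((a(x)1)Delta(b))
   piLbar_r a b = b bar-sqcap^L(a) = (eps(x)id)((a(x)b)E)                 *)
Definition piLbar_l (a b : A) : A := eps_id eps (T2 W a b).
Definition piLbar_r (a b : A) : A := eps_id eps (ER a b).
(* piRbar_r a b = b bar-sqcap^R(a) = (id(x)eps)(Delta(b)(1(x)a))
   piRbar_l a b = bar-sqcap^R(a) b = (id(x)eps)(E(b(x)a))                 *)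
Definition piRbar_r (a b : A) : A := id_eps eps (T1 W b a).
Definition piRbar_l (a b : A) : A := id_eps eps (EL b a).
(* piL_l a b = sqcap^L(a) b = (eps(x)id)(E(a(x)b))
   piL_r a b = b sqcap^L(a) = (eps(x)id)(Delta(b)(a(x)1))                 *)
Definition piL_l (a b : A) : A := eps_id eps (EL a b).
Definition piL_r (a b : A) : A := eps_id eps (T4 W a b).
(* piR_r a b = b sqcap^R(a) = (id(x)eps)((b(x)a)E)
   piR_l a b = sqcap^R(a) b = (id(x)eps)((1(x)a)Delta(b))                 *)
Definition piR_r (a b : A) : A := id_eps eps (ER b a).
Definition piR_l (a b : A) : A := id_eps eps (T3 W b a).

End WMBAx.
End WMB.

(* Each identity is the counit axiom in disguise.  The idempotent E fixes every
   Delta(a)(y (x) y') and (y (x) y')Delta(a), as these lie in the span of the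
   E(c (x) c') (resp. (c (x) c')E).  Multiplying T_1(a (x) b) and T_4(a (x) b) on
   the right, and T_2(a (x) b) and T_3(a (x) b) on the left, by any x (x) x' gives
   such an element, so by non-degeneracy of A (x) A we get E T_1 = T_1, E T_4 = T_4,
   T_2 E = T_2 and T_3 E = T_3, and the four sums become (eps (x) id)T_1,
   (id (x) eps)T_2, (eps (x) id)T_3 and (id (x) eps)T_4.  The first two are the
   counit axiom; the last two reduce to it through
   T_3(a (x) b)(1 (x) c) = (1 (x) b)T_1(a (x) c) and
   (c (x) 1)T_4(a (x) b) = T_2(c (x) b)(a (x) 1).
   Tensors are lists compared through all bilinear maps, so non-degeneracy of
   A (x) A is derived from that of A by means of linear forms separating a vector
   from a finite-dimensional subspace, which over an arbitrary field exist by
   Zorn's lemma. *)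

From HB Require Import structures.
From mathcomp Require Import all_boot all_algebra.
From mathcomp Require Import boolp classical_sets.
Import GRing.Theory.
Local Open Scope ring_scope.
Local Open Scope classical_set_scope.
Set Implicit Arguments. Unset Strict Implicit. Unset Printing Implicit Defensive.

Section LinearForms.
Variables (k : fieldType) (A : lmodType k).

Definition lin_closed (S : set A) := forall r x y, S x -> S y -> S (r *: x + y).

Definition lspan (l : seq A) : set A :=
  [set v | exists c : nat -> k, v = \sum_(i < size l) c i *: l`_i].

Section LinClosed.
Variable S : set A.
Hypothesis S_closed : lin_closed S.

Lemma lin_closed0 x : S x -> S 0.
Proof. by move=> Sx; have := S_closed (-1) Sx Sx; rewrite scaleN1r addNr. Qed.

Lemma lin_closedZ r x : S x -> S (r *: x).
Proof.
by move=> Sx; have := S_closed r Sx (lin_closed0 Sx); rewrite addr0.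
Qed.

End LinClosed.

Lemma lspan0 l : lspan l 0.
Proof. by exists (fun=> 0); rewrite big1 // => i _; rewrite scale0r. Qed.

Lemma lspan_closed l : lin_closed (lspan l).
Proof.
move=> r x y [cx ->] [cy ->]; exists (fun i => r * cx i + cy i).
rewrite scaler_sumr -big_split /=; apply: eq_bigr => i _.
by rewrite scalerDl scalerA.
Qed.

Lemma mem_lspan l x : x \in l -> lspan l x.
Proof.
move=> xl; exists (fun i => (i == index x l)%:R).
have ix : (index x l < size l)%N by rewrite index_mem.
rewrite (bigD1 (Ordinal ix)) //= eqxx scale1r nth_index // big1 ?addr0 // => i.
by rewrite -val_eqE /= => /negbTE ->; rewrite scale0r.
Qed.

Section Separation.
Variables (l : seq A) (e : A).
Hypothesis e_notin_span : ~ lspan l e.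

Definition avoids_e (W : set A) :=
  lin_closed W /\ forall w s, W w -> lspan l s -> w + s <> e.

Lemma exists_maximal_avoiding :
  exists W, [/\ avoids_e W, W 0 & forall B, W `<` B -> ~ avoids_e B].
Proof.
have [W [avW maxW]] : exists W, avoids_e W /\ forall B, W `<` B -> ~ avoids_e B.
  apply: Zorn_bigcup => F avF chainF; split.
    move=> r x y [X FX Xx] [Y FY Yy].
    have [XY|YX] := chainF _ _ FX FY.
      by exists Y => //; apply: (avF _ FY).1 => //; apply: XY.
    by exists X => //; apply: (avF _ FX).1 => //; apply: YX.
  by move=> w s [X FX Xw]; apply: (avF _ FX).2.
exists W; split => //.
have [[w Ww]|noW] := pselect (exists w, W w); first exact: (lin_closed0 (proj1 avW) Ww).
have av0 : avoids_e [set 0].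
  split=> [r x y -> ->|w s -> ls]; first by rewrite scaler0 addr0.
  by rewrite add0r => se; apply: e_notin_span; rewrite -se.
apply: contrapT => nW0; apply: (maxW [set 0]) => //; split=> [w Ww|sub0W].
  by case: noW; exists w.
by apply: nW0; apply: sub0W.
Qed.

Section Complement.
Variable W : set A.
Hypotheses (W_avoids : avoids_e W) (W0 : W 0).
Hypothesis W_maximal : forall B, W `<` B -> ~ avoids_e B.

Definition plus_lspan : set A :=
  [set v | exists w s, [/\ W w, lspan l s & v = w + s]].

Lemma plus_lspan_closed : lin_closed plus_lspan.
Proof.
move=> r _ _ [w [s [Ww ls ->]]] [w' [s' [Ww' ls' ->]]].
exists (r *: w + w'), (r *: s + s'); split; [exact: W_avoids.1|exact: lspan_closed|].
by rewrite scalerDr addrACA.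
Qed.

Lemma plus_lspan0 : plus_lspan 0.
Proof. by exists 0, 0; split; [|exact: lspan0|rewrite addr0]. Qed.

Lemma plus_lspan_e : ~ plus_lspan e.
Proof. by move=> [w [s [Ww ls se]]]; apply: (W_avoids.2 w s). Qed.

Lemma lspan_sub_plus_lspan : lspan l `<=` plus_lspan.
Proof. by move=> s ls; exists 0, s; rewrite add0r. Qed.

Lemma plus_lspan_decompose v : exists c u, plus_lspan u /\ v = u + c *: e.
Proof.
pose B := [set z | exists w r, W w /\ z = w + r *: v].
have [[_ [s [[w [r [Ww ->]]] ls wrse]]] | noB] :=
  pselect (exists z s, [/\ B z, lspan l s & z + s = e]).
  have r_neq0 : r != 0.
    apply: contra_notN plus_lspan_e => /eqP r0.
    by exists w, s; split; rewrite // -wrse r0 scale0r addr0.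
  exists r^-1, ((- r^-1) *: (w + s)); split.
    by apply: (lin_closedZ plus_lspan_closed); exists w, s.
  rewrite -wrse scaleNr addrC -scalerBr [w + _]addrC -[_ + w + s]addrA addrK.
  by rewrite scalerA mulVf // scale1r.
have WB : W `<=` B by move=> w Ww; exists w, 0; rewrite scale0r addr0.
have Wv : W v.
  apply: contrapT => nWv; apply: (W_maximal (B := B)).
    by split=> // BW; apply: nWv; apply: BW; exists 0, 1; rewrite add0r scale1r.
  split=> [r _ _ [w [c [Ww ->]]] [w' [c' [Ww' ->]]]|z s Bz ls zse].
    exists (r *: w + w'), (r * c + c'); split; first exact: W_avoids.1.
    by rewrite scalerDr addrACA scalerDl scalerA.
  by apply: noB; exists z, s.
exists 0, v; rewrite scale0r addr0; split=> //.
by exists v, 0; rewrite addr0; split=> //; apply: lspan0.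
Qed.

Lemma plus_lspan_decompose_unique c c' u u' :
  plus_lspan u -> plus_lspan u' -> u + c *: e = u' + c' *: e -> c = c'.
Proof.
move=> Su Su' eq_uu'; apply: contrapT => /eqP neq_cc'.
have d_neq0 : c - c' != 0 by rewrite subr_eq0.
apply: plus_lspan_e.
have -> : e = (c - c')^-1 *: ((-1) *: u + u').
  apply: (@scalerI _ _ (c - c')) => //.
  rewrite scalerA mulfV // scale1r scaleN1r scalerBl.
  by apply: (@addrI _ u); rewrite addrA eq_uu' addrK addNKr.
by apply: (lin_closedZ plus_lspan_closed); apply: plus_lspan_closed.
Qed.

End Complement.

Lemma exists_separating_form :
  exists phi, [/\ scalar phi, phi e = 1 & forall v, lspan l v -> phi v = 0].
Proof.
have [W [avW W0 maxW]] := exists_maximal_avoiding.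
have uniq := plus_lspan_decompose_unique avW.
have decomp := plus_lspan_decompose avW W0 maxW.
pose phi v := projT1 (cid (decomp v)).
have phiP v : exists u, plus_lspan W u /\ v = u + phi v *: e := projT2 (cid (decomp v)).
exists phi; split.
- move=> r x y.
  have [ux [Sx ex]] := phiP x; have [uy [Sy ey]] := phiP y.
  have [u [Su eu]] := phiP (r *: x + y).
  apply: (uniq _ _ _ _ Su (plus_lspan_closed avW r Sx Sy)).
  by rewrite -eu {1}ex {1}ey scalerDr scalerA addrACA scalerDl.
- have [u [Su eu]] := phiP e.
  by apply: (uniq _ _ _ _ Su (plus_lspan0 W0)); rewrite -eu add0r scale1r.
- move=> v lv; have [u [Su eu]] := phiP v.
  apply: (uniq _ _ _ _ Su (lspan_sub_plus_lspan W0 lv)).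
  by rewrite -eu scale0r addr0.
Qed.

End Separation.
End LinearForms.

Section Bilinear.
Variables (k : fieldType) (A V : lmodType k) (f : A -> A -> V).
Hypothesis f_bilin : bilin f.

Lemma bilin0l y : f 0 y = 0.
Proof.
by have := f_bilin.1 (-1) 0 0 y; rewrite scaleN1r oppr0 addr0 scaleN1r addNr.
Qed.

Lemma bilin0r x : f x 0 = 0.
Proof.
by have := f_bilin.2 (-1) x 0 0; rewrite scaleN1r oppr0 addr0 scaleN1r addNr.
Qed.

Lemma bilinDl x x' y : f (x + x') y = f x y + f x' y.
Proof. by have := f_bilin.1 1 x x' y; rewrite !scale1r. Qed.

Lemma bilinDr x y y' : f x (y + y') = f x y + f x y'.
Proof. by have := f_bilin.2 1 x y y'; rewrite !scale1r. Qed.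

Lemma bilinZl r x y : f (r *: x) y = r *: f x y.
Proof. by have := f_bilin.1 r x 0 y; rewrite !addr0 bilin0l addr0. Qed.

Lemma bilinZr r x y : f x (r *: y) = r *: f x y.
Proof. by have := f_bilin.2 r x y 0; rewrite !addr0 bilin0r addr0. Qed.

Lemma bilin_suml I (r : seq I) (F : I -> A) y :
  f (\sum_(i <- r) F i) y = \sum_(i <- r) f (F i) y.
Proof. exact: (big_morph (f^~ y) (fun x x' => bilinDl x x' y) (bilin0l y)). Qed.

Lemma bilin_sumr I (r : seq I) (F : I -> A) x :
  f x (\sum_(i <- r) F i) = \sum_(i <- r) f x (F i).
Proof. exact: (big_morph (f x) (bilinDr x) (bilin0r x)). Qed.

End Bilinear.

Section Tensors.
Variables (k : fieldType) (A : lmodType k).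
Implicit Types (s t d : tensor2 A) (phi : A -> k).

Lemma teq2_sym s t : teq2 s t -> teq2 t s.
Proof. by move=> eq_st V f fb; rewrite eq_st. Qed.

Lemma teq2_trans s t u : teq2 s t -> teq2 t u -> teq2 s u.
Proof. by move=> eq_st eq_tu V f fb; rewrite eq_st ?eq_tu. Qed.

Lemma bilin_swap (V : lmodType k) (f : A -> A -> V) :
  bilin f -> bilin (fun x y => f y x).
Proof. by move=> [fl fr]; split=> *; [rewrite fr|rewrite fl]. Qed.

Lemma bilin_linear_comp (V : lmodType k) (f : A -> A -> V) (g1 g2 : A -> A) :
  linear g1 -> linear g2 -> bilin f -> bilin (fun x y => f (g1 x) (g2 y)).
Proof. by move=> g1L g2L [fl fr]; split=> *; rewrite ?g1L ?g2L ?fl ?fr. Qed.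

Lemma bilin_scalar_l phi : scalar phi -> bilin (fun x y : A => phi x *: y).
Proof.
move=> phiS; split=> r x x' y /=; first by rewrite phiS scalerDl scalerA.
by rewrite scalerDr !scalerA mulrC.
Qed.

Lemma bilin_scalar_r phi : scalar phi -> bilin (fun x y : A => phi y *: x).
Proof. by move/bilin_scalar_l/bilin_swap. Qed.

Lemma sum_tscale2 r s (V : lmodType k) (f : A -> A -> V) : bilin f ->
  \sum_(p <- tscale2 r s) f p.1 p.2 = r *: \sum_(p <- s) f p.1 p.2.
Proof.
by move=> fb; rewrite big_map scaler_sumr; apply: eq_bigr => p _; rewrite (bilinZl fb).
Qed.

Lemma teq2_sub_nil s t : teq2 s t <-> teq2 (s ++ tscale2 (-1) t) [::].
Proof.
have sub (V : lmodType k) (f : A -> A -> V) : bilin f ->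
    \sum_(p <- s ++ tscale2 (-1) t) f p.1 p.2 =
    \sum_(p <- s) f p.1 p.2 - \sum_(p <- t) f p.1 p.2 :> V.
  by move=> fb; rewrite big_cat sum_tscale2 // scaleN1r.
split=> [eq_st V f fb|eq0 V f fb]; first by rewrite sub // eq_st // subrr big_nil.
by apply/eqP; rewrite -subr_eq0 -sub // eq0 // big_nil.
Qed.

Lemma sum_tensor_absorb_head (a : A) s (c : nat -> k) (V : lmodType k)
    (f : A -> A -> V) : bilin f ->
  \sum_(p <- (a, \sum_(i < size s) c i *: (unzip2 s)`_i) :: s) f p.1 p.2 =
  \sum_(p <- mkseq (fun i => ((nth (0, 0) s i).1 + c i *: a, (nth (0, 0) s i).2))
                   (size s)) f p.1 p.2.
Proof.
move=> fb; rewrite big_cons /= (bilin_sumr fb) (big_nth (0, 0)) /mkseq big_map.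
rewrite -(big_mkord xpredT (fun i => f a (c i *: (unzip2 s)`_i))) -big_split /=.
rewrite /index_iota subn0; apply: eq_big_seq => i; rewrite mem_iota => /andP[_ lt_i].
by rewrite (nth_map (0, 0)) // (bilinZr fb) (bilinDl fb) (bilinZl fb) addrC.
Qed.

(* Induction on the length: either the second factor [e] of the head is absorbed
   into the tail, or a form separating [e] from the other second factors
   shows that the first factor of the head vanishes. *)
Lemma teq2_nil_of_scalar_r s :
  (forall phi, scalar phi -> \sum_(p <- s) phi p.2 *: p.1 = 0) -> teq2 s [::].
Proof.
have [n] := ubnP (size s); elim: n s => // n IH [|[a e] s] //; rewrite ltnS.
move=> lt_s_n vanish V f fb.
have [[c ec]|e_out] := pselect (lspan (unzip2 s) e).
  rewrite size_map in ec; subst e.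
  rewrite (sum_tensor_absorb_head _ _ _ fb); apply: IH fb => [|phi phiS].
    by rewrite size_mkseq.
  by rewrite -(sum_tensor_absorb_head _ _ _ (bilin_scalar_r phiS)); apply: vanish.
have [phi [phiS phie phi_s]] := exists_separating_form e_out.
have a0 : a = 0.
  have := vanish phi phiS; rewrite big_cons /= phie scale1r big1_seq ?addr0 //.
  by move=> p /andP[_ ps]; rewrite phi_s ?scale0r //; apply/mem_lspan/map_f.
subst a; rewrite big_cons /= (bilin0l fb) add0r; apply: IH fb => // psi psiS.
by have := vanish psi psiS; rewrite big_cons /= scaler0 add0r.
Qed.

Lemma teq2_nil_of_scalar_l s :
  (forall phi, scalar phi -> \sum_(p <- s) phi p.1 *: p.2 = 0) -> teq2 s [::].
Proof.
move=> vanish V f fb.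
have := teq2_nil_of_scalar_r (s := [seq (p.2, p.1) | p <- s]) _ (bilin_swap fb).
by rewrite big_map !big_nil /=; apply=> phi phiS; rewrite big_map; apply: vanish.
Qed.

Section NondegenerateProduct.
Variable m : A -> A -> A.
Hypothesis m_bilin : bilin m.
Hypothesis m_nondeg : forall b, (forall a, m b a = 0) -> b = 0.

(* A linear form kills the first factor and non-degeneracy of [m] recovers
   the second one; doing this once on each side reduces to linear forms only. *)
Lemma teq2_nil_of_mulr d :
  (forall x x', teq2 [seq (m p.1 x, m p.2 x') | p <- d] [::]) -> teq2 d [::].
Proof.
move=> d_mul0.
have form_l x psi : scalar psi -> \sum_(p <- d) psi (m p.1 x) *: p.2 = 0.
  move=> psiS; apply: m_nondeg => x'; rewrite (bilin_suml m_bilin).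
  transitivity (\sum_(p <- d) psi (m p.1 x) *: m p.2 x').
    by apply: eq_bigr => p _; rewrite (bilinZl m_bilin).
  by have := d_mul0 x x' A _ (bilin_scalar_l psiS); rewrite big_map big_nil.
have mul_l0 x : teq2 [seq (m p.1 x, p.2) | p <- d] [::].
  by apply: teq2_nil_of_scalar_l => psi psiS; rewrite big_map; apply: form_l.
apply: teq2_nil_of_scalar_r => phi phiS; apply: m_nondeg => x.
rewrite (bilin_suml m_bilin).
transitivity (\sum_(p <- d) phi p.2 *: m p.1 x).
  by apply: eq_bigr => p _; rewrite (bilinZl m_bilin).
by have := mul_l0 x A _ (bilin_scalar_r phiS); rewrite big_map big_nil.
Qed.

Lemma teq2_of_mulr s t :
  (forall x x', teq2 [seq (m p.1 x, m p.2 x') | p <- s]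
                     [seq (m p.1 x, m p.2 x') | p <- t]) -> teq2 s t.
Proof.
move=> st_mul; apply/teq2_sub_nil/teq2_nil_of_mulr => x x'.
rewrite map_cat.
have -> : [seq (m p.1 x, m p.2 x') | p <- tscale2 (-1) t] =
          tscale2 (-1) [seq (m p.1 x, m p.2 x') | p <- t].
  by rewrite /tscale2 -!map_comp; apply: eq_map => p /=; rewrite (bilinZl m_bilin).
exact: (teq2_sub_nil _ _).1 (st_mul x x').
Qed.

End NondegenerateProduct.

Lemma sum_tlift2 (F : A -> A -> tensor2 A) s (V : lmodType k) (f : A -> A -> V) :
  \sum_(p <- tlift2 F s) f p.1 p.2 = \sum_(p <- s) \sum_(q <- F p.1 p.2) f q.1 q.2.
Proof. by rewrite big_flatten big_map. Qed.

Lemma bilin_tlift2 (F : A -> A -> tensor2 A) (V : lmodType k) (f : A -> A -> V) :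
  tbilin2 F -> bilin f -> bilin (fun x y => \sum_(q <- F x y) f q.1 q.2).
Proof.
move=> [Fl Fr] fb; split=> r x x' y /=.
  by rewrite (Fl r x x' y V f fb) big_cat sum_tscale2.
by rewrite (Fr r x x' y V f fb) big_cat sum_tscale2.
Qed.

Lemma teq2_tlift2 (F : A -> A -> tensor2 A) s t :
  tbilin2 F -> teq2 s t -> teq2 (tlift2 F s) (tlift2 F t).
Proof.
by move=> Fb eq_st V f fb; rewrite !sum_tlift2; apply: eq_st V _ (bilin_tlift2 Fb fb).
Qed.

Lemma teq2_tlift2_fixed (F G : A -> A -> tensor2 A) u :
  tbilin2 F -> (forall c c', teq2 (tlift2 F (G c c')) (G c c')) ->
  tspan2 (fun t => exists c c', t = G c c') u -> teq2 (tlift2 F u) u.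
Proof.
move=> Fb FG [l [lG eq_u]] V f fb; rewrite sum_tlift2.
rewrite (eq_u V _ (bilin_tlift2 Fb fb)) (eq_u V f fb) !big_flatten !big_map.
apply: eq_big_seq => q ql.
rewrite (sum_tscale2 _ _ (bilin_tlift2 Fb fb)) (sum_tscale2 _ _ fb).
by have [c [c' ->]] := lG q ql; rewrite -sum_tlift2 FG.
Qed.

Lemma teq2_map (g1 g2 : A -> A) s t : linear g1 -> linear g2 -> teq2 s t ->
  teq2 [seq (g1 p.1, g2 p.2) | p <- s] [seq (g1 p.1, g2 p.2) | p <- t].
Proof.
move=> g1L g2L eq_st V f fb; rewrite !big_map.
exact: eq_st V _ (bilin_linear_comp g1L g2L fb).
Qed.

Lemma teq2_flatten (I : Type) (F G : I -> tensor2 A) (r : seq I) :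
  (forall i, teq2 (F i) (G i)) -> teq2 (flatten (map F r)) (flatten (map G r)).
Proof.
by move=> FG V f fb; rewrite !big_flatten !big_map; apply: eq_bigr => i _; apply: FG.
Qed.

Lemma eps_id_teq2 phi s t : scalar phi -> teq2 s t -> eps_id phi s = eps_id phi t.
Proof. by move=> phiS eq_st; apply: eq_st A _ (bilin_scalar_l phiS). Qed.

Lemma id_eps_teq2 phi s t : scalar phi -> teq2 s t -> id_eps phi s = id_eps phi t.
Proof. by move=> phiS eq_st; apply: eq_st A _ (bilin_scalar_r phiS). Qed.

Lemma sum_eps_id_tlift2 phi (F : A -> A -> tensor2 A) s t :
  scalar phi -> tbilin2 F -> teq2 s t -> teq2 (tlift2 F t) t ->
  \sum_(p <- s) eps_id phi (F p.1 p.2) = eps_id phi t.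
Proof.
move=> phiS Fb eq_st Ft; rewrite (eq_st _ _ (bilin_tlift2 Fb (bilin_scalar_l phiS))).
by rewrite -(sum_tlift2 F t (fun x y => phi x *: y)); apply: eps_id_teq2 Ft.
Qed.

Lemma sum_id_eps_tlift2 phi (F : A -> A -> tensor2 A) s t :
  scalar phi -> tbilin2 F -> teq2 s t -> teq2 (tlift2 F t) t ->
  \sum_(p <- s) id_eps phi (F p.1 p.2) = id_eps phi t.
Proof.
move=> phiS Fb eq_st Ft; rewrite (eq_st _ _ (bilin_tlift2 Fb (bilin_scalar_r phiS))).
by rewrite -(sum_tlift2 F t (fun x y => phi y *: x)); apply: id_eps_teq2 Ft.
Qed.

End Tensors.

Section AlgebraTensors.
Variables (k : fieldType) (A : lmodType k) (mul : A -> A -> A).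
Hypotheses (mul_alg : nualg mul) (mul_nondeg : nondeg_mul mul).
Implicit Types (s t : tensor2 A).

Definition rmul2 s x x' : tensor2 A := [seq (mul p.1 x, mul p.2 x') | p <- s].
Definition lmul2 x x' s : tensor2 A := [seq (mul x p.1, mul x' p.2) | p <- s].

Lemma mul_bilin : bilin mul.
Proof. by case: mul_alg. Qed.

Lemma mulA x y z : mul x (mul y z) = mul (mul x y) z.
Proof. by case: mul_alg. Qed.

Lemma linear_mull x : linear (mul x).
Proof. by move=> r y y'; rewrite mul_bilin.2. Qed.

Lemma linear_mulr x : linear (mul^~ x).
Proof. by move=> r y y'; rewrite /= mul_bilin.1. Qed.

Lemma mul_injl x y : (forall c, mul x c = mul y c) -> x = y.
Proof.
move=> eq_xy; apply/eqP; rewrite -subr_eq0; apply/eqP/mul_nondeg.2 => c.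
by rewrite -scaleN1r addrC mul_bilin.1 eq_xy scaleN1r addNr.
Qed.

Lemma mul_injr x y : (forall c, mul c x = mul c y) -> x = y.
Proof.
move=> eq_xy; apply/eqP; rewrite -subr_eq0; apply/eqP/mul_nondeg.1 => c.
by rewrite -scaleN1r addrC mul_bilin.2 eq_xy scaleN1r addNr.
Qed.

Lemma tprod2_seq1r s x x' : tprod2 mul s [:: (x, x')] = rmul2 s x x'.
Proof. exact: allpairs1r. Qed.

Lemma tprod2_seq1l s x x' : tprod2 mul [:: (x, x')] s = lmul2 x x' s.
Proof. exact: allpairs1l. Qed.

Lemma rmul2A s x x' y y' : rmul2 (rmul2 s y y') x x' = rmul2 s (mul y x) (mul y' x').
Proof. by rewrite /rmul2 -map_comp; apply: eq_map => p /=; rewrite !mulA. Qed.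

Lemma lmul2A s x x' y y' : lmul2 x x' (lmul2 y y' s) = lmul2 (mul x y) (mul x' y') s.
Proof. by rewrite /lmul2 -map_comp; apply: eq_map => p /=; rewrite !mulA. Qed.

Lemma lmul2_rmul2 s x x' z z' : lmul2 z z' (rmul2 s x x') = rmul2 (lmul2 z z' s) x x'.
Proof. by rewrite /lmul2 /rmul2 -!map_comp; apply: eq_map => p /=; rewrite !mulA. Qed.

Lemma teq2_rmul2 s t x x' : teq2 s t -> teq2 (rmul2 s x x') (rmul2 t x x').
Proof. exact: teq2_map (linear_mulr x) (linear_mulr x'). Qed.

Lemma teq2_lmul2 s t x x' : teq2 s t -> teq2 (lmul2 x x' s) (lmul2 x x' t).
Proof. exact: teq2_map (linear_mull x) (linear_mull x'). Qed.

Lemma teq2_of_rmul2 s t : (forall x x', teq2 (rmul2 s x x') (rmul2 t x x')) -> teq2 s t.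
Proof. exact: teq2_of_mulr mul_bilin mul_nondeg.2 s t. Qed.

Lemma teq2_of_lmul2 s t : (forall x x', teq2 (lmul2 x x' s) (lmul2 x x' t)) -> teq2 s t.
Proof. exact: teq2_of_mulr (bilin_swap mul_bilin) mul_nondeg.1 s t. Qed.

Lemma teq2_lmul_2 b s t : teq2 s t -> teq2 (lmul_2 mul b s) (lmul_2 mul b t).
Proof. exact: (@teq2_map _ _ id (mul b) s t (fun _ _ _ => erefl) (linear_mull b)). Qed.

Lemma teq2_rmul_1 a s t : teq2 s t -> teq2 (rmul_1 mul s a) (rmul_1 mul t a).
Proof. exact: (@teq2_map _ _ (mul^~ a) id s t (linear_mulr a) (fun _ _ _ => erefl)). Qed.

Lemma rmul2_rmul_2 s c x x' : rmul2 (rmul_2 mul s c) x x' = rmul2 s x (mul c x').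
Proof. by rewrite /rmul2 /rmul_2 -map_comp; apply: eq_map => p /=; rewrite mulA. Qed.

Lemma rmul2_lmul_2 s b x x' : rmul2 (lmul_2 mul b s) x x' = lmul_2 mul b (rmul2 s x x').
Proof. by rewrite /rmul2 /lmul_2 -!map_comp; apply: eq_map => p /=; rewrite mulA. Qed.

Lemma lmul2_lmul_1 s c x x' : lmul2 x x' (lmul_1 mul c s) = lmul2 (mul x c) x' s.
Proof. by rewrite /lmul2 /lmul_1 -map_comp; apply: eq_map => p /=; rewrite mulA. Qed.

Lemma lmul2_rmul_1 s a x x' : lmul2 x x' (rmul_1 mul s a) = rmul_1 mul (lmul2 x x' s) a.
Proof. by rewrite /lmul2 /rmul_1 -!map_comp; apply: eq_map => p /=; rewrite mulA. Qed.

Lemma eps_id_rmul_2 phi s c : eps_id phi (rmul_2 mul s c) = mul (eps_id phi s) c.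
Proof.
rewrite /eps_id big_map (bilin_suml mul_bilin).
by apply: eq_bigr => p _; rewrite (bilinZl mul_bilin).
Qed.

Lemma eps_id_lmul_2 phi s b : eps_id phi (lmul_2 mul b s) = mul b (eps_id phi s).
Proof.
rewrite /eps_id big_map (bilin_sumr mul_bilin).
by apply: eq_bigr => p _; rewrite (bilinZr mul_bilin).
Qed.

Lemma id_eps_lmul_1 phi s c : id_eps phi (lmul_1 mul c s) = mul c (id_eps phi s).
Proof.
rewrite /id_eps big_map (bilin_sumr mul_bilin).
by apply: eq_bigr => p _; rewrite (bilinZr mul_bilin).
Qed.

Lemma id_eps_rmul_1 phi s a : id_eps phi (rmul_1 mul s a) = mul (id_eps phi s) a.
Proof.
rewrite /id_eps big_map (bilin_suml mul_bilin).
by apply: eq_bigr => p _; rewrite (bilinZl mul_bilin).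
Qed.

Section Multiplier.
Variables (L R : A -> A -> tensor2 A).
Hypothesis LR_mult : is_mult2 mul L R.

Lemma mult2_comm x x' y y' : teq2 (lmul2 x x' (L y y')) (rmul2 (R x x') y y').
Proof. by case: LR_mult => _ _; rewrite -tprod2_seq1l -tprod2_seq1r. Qed.

Lemma mult2_rmul2 y y' x x' : teq2 (rmul2 (L y y') x x') (L (mul y x) (mul y' x')).
Proof.
apply: teq2_of_lmul2 => z z'; rewrite lmul2_rmul2.
apply: teq2_trans (teq2_rmul2 x x' (mult2_comm z z' y y')) _.
by rewrite rmul2A; apply: teq2_sym; apply: mult2_comm.
Qed.

Lemma mult2_lmul2 y y' x x' : teq2 (lmul2 x x' (R y y')) (R (mul x y) (mul x' y')).
Proof.
apply: teq2_of_rmul2 => z z'; rewrite -lmul2_rmul2.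
apply: teq2_trans (teq2_lmul2 x x' (teq2_sym (mult2_comm y y' z z'))) _.
by rewrite lmul2A; apply: mult2_comm.
Qed.

Lemma rmul2_tlift2 t x x' :
  teq2 (rmul2 (tlift2 L t) x x') (tlift2 L (rmul2 t x x')).
Proof.
rewrite /rmul2 /tlift2 map_flatten -!map_comp.
by apply: teq2_flatten => p; apply: mult2_rmul2.
Qed.

Lemma lmul2_tlift2 t x x' :
  teq2 (lmul2 x x' (tlift2 R t)) (tlift2 R (lmul2 x x' t)).
Proof.
rewrite /lmul2 /tlift2 map_flatten -!map_comp.
by apply: teq2_flatten => p; apply: mult2_lmul2.
Qed.

End Multiplier.
End AlgebraTensors.

Section WeakMultiplierBialgebra.
Variables (k : fieldType) (A : lmodType k) (W : wmb_data A).
Hypothesis W_wmb : is_wmb W.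

Let mul_alg := wmb_alg W_wmb.
Let mul_nondeg := wmb_nondeg W_wmb.
Let EL_bilin : tbilin2 (EL W). Proof. by case: (wmb_E_mult W_wmb). Qed.
Let ER_bilin : tbilin2 (ER W). Proof. by case: (wmb_E_mult W_wmb). Qed.

Lemma EL_DL a y y' : teq2 (tlift2 (EL W) (DL W a y y')) (DL W a y y').
Proof.
apply: teq2_tlift2_fixed EL_bilin (fun c c' => (wmb_E_idem W_wmb c c').1) _.
exact: (wmb_span_L W_wmb).1.
Qed.

Lemma ER_DR a y y' : teq2 (tlift2 (ER W) (DR W a y y')) (DR W a y y').
Proof.
apply: teq2_tlift2_fixed ER_bilin (fun c c' => (wmb_E_idem W_wmb c c').2) _.
exact: (wmb_span_R W_wmb).1.
Qed.

Lemma EL_fixed t :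
  (forall x x', exists a y y', teq2 (rmul2 (mul W) t x x') (DL W a y y')) ->
  teq2 (tlift2 (EL W) t) t.
Proof.
move=> tDL; apply: (teq2_of_rmul2 mul_alg mul_nondeg) => x x'.
have [a [y [y' eq_t]]] := tDL x x'.
apply: teq2_trans (rmul2_tlift2 mul_alg mul_nondeg (wmb_E_mult W_wmb) t x x') _.
apply: teq2_trans (teq2_tlift2 EL_bilin eq_t) _.
exact: teq2_trans (EL_DL a y y') (teq2_sym eq_t).
Qed.

Lemma ER_fixed t :
  (forall x x', exists a y y', teq2 (lmul2 (mul W) x x' t) (DR W a y y')) ->
  teq2 (tlift2 (ER W) t) t.
Proof.
move=> tDR; apply: (teq2_of_lmul2 mul_alg mul_nondeg) => x x'.
have [a [y [y' eq_t]]] := tDR x x'.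
apply: teq2_trans (lmul2_tlift2 mul_alg mul_nondeg (wmb_E_mult W_wmb) t x x') _.
apply: teq2_trans (teq2_tlift2 ER_bilin eq_t) _.
exact: teq2_trans (ER_DR a y y') (teq2_sym eq_t).
Qed.

Lemma EL_T1 a b : teq2 (tlift2 (EL W) (T1 W a b)) (T1 W a b).
Proof.
apply: EL_fixed => x x'; exists a, x, (mul W b x').
by rewrite -tprod2_seq1r; apply: (wmb_T1 W_wmb a b x x').1.
Qed.

Lemma ER_T2 a b : teq2 (tlift2 (ER W) (T2 W a b)) (T2 W a b).
Proof.
apply: ER_fixed => x x'; exists b, (mul W x a), x'.
by rewrite -tprod2_seq1l; apply: (wmb_T2 W_wmb a b x x').2.
Qed.

End WeakMultiplierBialgebra.

Section RegularWeakMultiplierBialgebra.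
Variables (k : fieldType) (A : lmodType k) (W : wmb_data A).
Hypothesis W_reg : is_regular_wmb W.

Let W_wmb : is_wmb W. Proof. by case: W_reg. Qed.
Let mul_alg := wmb_alg W_wmb.
Let mul_nondeg := wmb_nondeg W_wmb.
Let T3_mul : forall a b x x',
    teq2 (tprod2 (mul W) (T3 W a b) [:: (x, x')]) (lmul_2 (mul W) b (DL W a x x'))
 /\ teq2 (tprod2 (mul W) [:: (x, x')] (T3 W a b)) (DR W a x (mul W x' b)).
Proof. by case: W_reg. Qed.
Let T4_mul : forall a b x x',
    teq2 (tprod2 (mul W) (T4 W a b) [:: (x, x')]) (DL W b (mul W a x) x')
 /\ teq2 (tprod2 (mul W) [:: (x, x')] (T4 W a b)) (rmul_1 (mul W) (DR W b x x') a).
Proof. by case: W_reg. Qed.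

Lemma ER_T3 a b : teq2 (tlift2 (ER W) (T3 W a b)) (T3 W a b).
Proof.
apply: (ER_fixed W_wmb) => x x'; exists a, x, (mul W x' b).
by rewrite -tprod2_seq1l; apply: (T3_mul a b x x').2.
Qed.

Lemma EL_T4 a b : teq2 (tlift2 (EL W) (T4 W a b)) (T4 W a b).
Proof.
apply: (EL_fixed W_wmb) => x x'; exists b, (mul W a x), x'.
by rewrite -tprod2_seq1r; apply: (T4_mul a b x x').1.
Qed.

Lemma T3_rmul_2 a b c :
  teq2 (rmul_2 (mul W) (T3 W a b) c) (lmul_2 (mul W) b (T1 W a c)).
Proof.
apply: (teq2_of_rmul2 mul_alg mul_nondeg) => x x'.
rewrite (rmul2_rmul_2 mul_alg) (rmul2_lmul_2 mul_alg) -tprod2_seq1r.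
apply: teq2_trans (T3_mul a b x (mul W c x')).1 _.
apply: (teq2_lmul_2 mul_alg); rewrite -tprod2_seq1r.
exact: teq2_sym (wmb_T1 W_wmb a c x x').1.
Qed.

Lemma T4_lmul_1 a b c :
  teq2 (lmul_1 (mul W) c (T4 W a b)) (rmul_1 (mul W) (T2 W c b) a).
Proof.
apply: (teq2_of_lmul2 mul_alg mul_nondeg) => x x'.
rewrite (lmul2_lmul_1 mul_alg) (lmul2_rmul_1 mul_alg) -tprod2_seq1l.
apply: teq2_trans (T4_mul a b (mul W x c) x').2 _.
apply: (teq2_rmul_1 mul_alg); rewrite -tprod2_seq1l.
exact: teq2_sym (wmb_T2 W_wmb c b x x').2.
Qed.

Lemma eps_id_T3 a b : eps_id (eps W) (T3 W a b) = mul W b a.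
Proof.
apply: (mul_injl mul_alg mul_nondeg) => c.
rewrite -(eps_id_rmul_2 mul_alg) (eps_id_teq2 (wmb_eps_lin W_wmb) (T3_rmul_2 a b c)).
by rewrite (eps_id_lmul_2 mul_alg) (wmb_counit W_wmb a c).1 (mulA mul_alg).
Qed.

Lemma id_eps_T4 a b : id_eps (eps W) (T4 W a b) = mul W b a.
Proof.
apply: (mul_injr mul_alg mul_nondeg) => c.
rewrite -(id_eps_lmul_1 mul_alg) (id_eps_teq2 (wmb_eps_lin W_wmb) (T4_lmul_1 a b c)).
by rewrite (id_eps_rmul_1 mul_alg) (wmb_counit W_wmb c b).2 (mulA mul_alg).
Qed.

End RegularWeakMultiplierBialgebra.

Unset Implicit Arguments.

Theorem lemma3p7 (k : fieldType) (A : lmodType k) (W : wmb_data A)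
  (HW : is_regular_wmb W) (a b : A) :
  [/\ (* (1) *)
      (forall s : tensor2 A, teq2 s (T3 W a b) ->
         \sum_(p <- s) piLbar_r W p.1 p.2 = mul W b a),
      (* (2) *)
      (forall s : tensor2 A, teq2 s (T4 W a b) ->
         \sum_(p <- s) piRbar_l W p.2 p.1 = mul W b a),
      (* (3) *)
      (forall s : tensor2 A, teq2 s (T1 W a b) ->
         \sum_(p <- s) piL_l W p.1 p.2 = mul W a b) &
      (* (4) *)
      (forall s : tensor2 A, teq2 s (T2 W a b) ->
         \sum_(p <- s) piR_r W p.2 p.1 = mul W a b)].
Proof.
have W_wmb : is_wmb W by case: HW.
have eps_scalar : scalar (eps W) := wmb_eps_lin W_wmb.
have [EL_bilin ER_bilin _] := wmb_E_mult W_wmb.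
split=> s eq_s.
- rewrite /piLbar_r (sum_eps_id_tlift2 eps_scalar ER_bilin eq_s (ER_T3 HW a b)).
  exact: eps_id_T3.
- rewrite /piRbar_l (sum_id_eps_tlift2 eps_scalar EL_bilin eq_s (EL_T4 HW a b)).
  exact: id_eps_T4.
- rewrite /piL_l (sum_eps_id_tlift2 eps_scalar EL_bilin eq_s (EL_T1 W_wmb a b)).
  exact: (wmb_counit W_wmb a b).1.
- rewrite /piR_r (sum_id_eps_tlift2 eps_scalar ER_bilin eq_s (ER_T2 W_wmb a b)).
  exact: (wmb_counit W_wmb a b).2.
Qed.
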